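(* For all integers $n\ge 1$ and $r\ge 1$, $$\sum_{k=1}^n {(-1)^k\over k^r}{n\choose k}{n+k\choose k}=-\sum_{d=1}^r 2^d\sum_{\substack{{\bf s}=(s_1,\dots,s_d)\\ |{\bf s}|=r}} H_n(s_1,s_2,\dots,s_d),$$ where the inner sum runs over all vectors ${\bf s}=(s_1,\dots,s_d)$ of positive integers with $s_1+\cdots+s_d=r$.
   Context: For a vector ${\bf s}=(s_1,\dots,s_d)$ of positive integers, $|{\bf s}|=\sum_{i=1}^d s_i$, and the multiple harmonic sum is $H_n(s_1,\dots,s_d)=\sum_{1\le k_1<k_2<\cdots<k_d\le n}\frac{1}{k_1^{s_1}k_2^{s_2}\cdots k_d^{s_d}}$. *)

From mathcomp Require Import all_boot all_order all_algebra.
Set Implicit Arguments. Unset Strict Implicit. Unset Printing Implicit Defensive.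
Import Order.TTheory GRing.Theory Num.Theory.
Local Open Scope ring_scope.

(* Multiple harmonic sum H_n(s_1,...,s_d) over rationals:
   sum over 1 <= k_1 < k_2 < ... < k_d <= n of 1/(k_1^{s_1} ... k_d^{s_d}).
   Indices k_i range over 'I_n.+1 = {0,...,n}, restricted to k_i >= 1 and
   strictly increasing. *)
Definition incr_pos (n d : nat) (k : d.-tuple 'I_n.+1) : bool :=
  (0 < head 0%N (map val k))%N && sorted ltn (map val k).

Definition mhs (n d : nat) (s : d.-tuple nat) : rat :=
  \sum_(k : d.-tuple 'I_n.+1 | incr_pos k)
     \prod_(i < d) (((tnth k i : nat)%:R) ^+ (tnth s i))^-1.

Definition is_comp (r d : nat) (s : d.-tuple 'I_r.+1) : bool :=
  all (fun x : 'I_r.+1 => (0 < x)%N) s && (\sum_(i < d) (tnth s i : nat) == r)%N.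

From mathcomp Require Import all_boot all_order all_algebra zify.
From mathcomp.algebra_tactics Require Import ring lra.
Set Implicit Arguments. Unset Strict Implicit. Unset Printing Implicit Defensive.
Import Order.TTheory GRing.Theory Num.Theory.
Local Open Scope ring_scope.

(* Write S(n, m) for the alternating binomial sum with exponent m and
   Z(n, m) := \sum_d 2^d \sum_(|s| = m) H_n(s).  Splitting off the largest summation
   index shows that Z(n, m) is the coefficient of x^m in \prod_(k <= n) (k + x)/(k - x),
   hence (n+1) Z(n+1, m+1) - Z(n+1, m) = (n+1) Z(n, m+1) + Z(n, m).  Termwise, the identity
   C(n+1,k) C(n+1+k,k) (n+1-k) = C(n,k) C(n+k,k) (n+1+k) gives -S the same recurrence.
   The values at m = 0 differ, but the recurrence only needs S(n+1, 0) + S(n, 0) = -2,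
   which telescopes; induction on n and m then yields S = -Z. *)

Lemma bin_central_prod_succ n k :
  ('C(n.+1, k) * 'C(n.+1 + k, k) * (n.+1 - k) = 'C(n, k) * 'C(n + k, k) * (n.+1 + k))%N.
Proof.
have down_n := mul_bin_down n.+1 k; have down_nk := mul_bin_down (n.+1 + k) k.
rewrite /= addSn /= -addSn addnK in down_n down_nk *.
rewrite mulnAC [('C(n.+1, k) * _)%N]mulnC -down_n mulnAC -down_nk; ring.
Qed.

Lemma bin_central_prod_add n k : (0 < k)%N ->
  ('C(n.+1, k) * 'C(n.+1 + k, k) + 'C(n, k) * 'C(n + k, k) =
   2 * ('C(n, k) * 'C(n.+1 + k, k) + 'C(n, k.-1) * 'C(n + k, k.-1)))%N.
Proof.
case: k => // j _ /=.
have diag_nj : ((n + j).+1 * 'C(n + j, j) = j.+1 * 'C((n + j).+1, j.+1))%N.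
  exact: mul_bin_diag.
have diag_n : (n.+1 * 'C(n, j) = j.+1 * ('C(n, j.+1) + 'C(n, j)))%N.
  exact: mul_bin_diag.
have down_nj : ((n + j).+1 * 'C(n + j, j) = n.+1 * 'C((n + j).+1, j))%N.
  by rewrite (mul_bin_down (n + j).+1 j) /= subSn ?leq_addl // addnK.
rewrite !addSn !addnS binS binS.
set a := 'C(n, j.+1) in diag_n *; set a' := 'C(n, j) in diag_n *.
set b := 'C((n + j).+1, j.+1) in diag_nj *; set b' := 'C((n + j).+1, j) in down_nj *.
set c := 'C(n + j, j) in diag_nj down_nj.
have cross : (a' * b = (a + a') * b')%N.
  apply/eqP; rewrite -(eqn_pmul2l (ltn0Sn j)); apply/eqP.
  rewrite mulnCA -diag_nj down_nj [LHS]mulnCA [LHS]mulnA diag_n; ring.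
nia.
Qed.

Lemma telescope_sign_sumr (R : comPzRingType) (f : nat -> R) M :
  \sum_(1 <= k < M.+1) (-1) ^+ k * (f k + f k.-1) = (-1) ^+ M * f M - f 0%N.
Proof.
elim: M => [|M IH]; first by rewrite big_geq // expr0 mul1r subrr.
by rewrite big_nat_recr //= IH exprS; ring.
Qed.

Definition apery_sum n m : rat :=
  \sum_(1 <= k < n.+1) ((-1) ^+ k / (k%:R ^+ m) * ('C(n, k))%:R * ('C(n + k, k))%:R).

Lemma apery_sum_widen n m : apery_sum n m =
  \sum_(1 <= k < n.+2) ((-1) ^+ k / (k%:R ^+ m) * ('C(n, k))%:R * ('C(n + k, k))%:R).
Proof. by rewrite [RHS]big_nat_recr //= bin_small // mulr0 mul0r addr0. Qed.

Lemma apery_sum_rec n m :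
  n.+1%:R * apery_sum n.+1 m.+1 - apery_sum n.+1 m =
  n.+1%:R * apery_sum n m.+1 + apery_sum n m.
Proof.
rewrite !(apery_sum_widen n) /apery_sum !mulr_sumr -!sumrB -!big_split /=.
apply: eq_big_nat => k /andP [k_gt0 k_le].
have k_neq0 : k%:R != 0 :> rat by rewrite pnatr_eq0 -lt0n.
have := congr1 (fun x => x%:R : rat) (bin_central_prod_succ n k).
rewrite /= !natrM natrB // natrD => succ_k.
set A := 'C(n.+1, k)%:R : rat in succ_k *; set B := 'C(n.+1 + k, k)%:R : rat in succ_k *.
set C := 'C(n, k)%:R : rat in succ_k *; set D := 'C(n + k, k)%:R : rat in succ_k *.
transitivity ((-1) ^+ k / k%:R ^+ m.+1 * (A * B * (n.+1%:R - k%:R))).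
  by rewrite exprSr; field; rewrite k_neq0 expf_neq0.
by rewrite succ_k exprSr; field; rewrite k_neq0 expf_neq0.
Qed.

Lemma apery_sum0_rec n : apery_sum n.+1 0 + apery_sum n 0 = -2.
Proof.
rewrite (apery_sum_widen n) /apery_sum -big_split /=.
pose f k := ('C(n, k) * 'C(n.+1 + k, k))%:R : rat.
transitivity (2 * \sum_(1 <= k < n.+2) (-1) ^+ k * (f k + f k.-1)).
  rewrite mulr_sumr; apply: eq_big_nat => k /andP [k_gt0 _].
  rewrite !expr0 !divr1 -!mulrA -mulrDr -!natrM -natrD bin_central_prod_add //.
  by case: k k_gt0 => //= j _; rewrite /f !natrM natrD !natrM !addSn !addnS; ring.
by rewrite (telescope_sign_sumr f) /f bin_small // mul0n mulr0 !bin0; ring.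
Qed.

(* [mhs2 b m] is the coefficient of [x ^ m] in [\prod_(1 <= k < b.+1) (k + x) / (k - x)],
   each factor being expanded as [1 + 2 \sum_(j >= 1) (x / k) ^ j]. *)
Fixpoint mhs2 (b m : nat) : rat :=
  match b with
  | 0 => (m == 0%N)%:R
  | b'.+1 => mhs2 b' m + 2 * \sum_(1 <= j < m.+1) (b'.+1%:R ^+ j)^-1 * mhs2 b' (m - j)
  end.

Lemma mhs2_weight0 b : mhs2 b 0 = 1.
Proof. by elim: b => //= b ->; rewrite big_geq // mulr0 addr0. Qed.

Lemma mhs2_rec b m :
  b.+1%:R * mhs2 b.+1 m.+1 - mhs2 b.+1 m = b.+1%:R * mhs2 b m.+1 + mhs2 b m.
Proof.
have b_neq0 : b.+1%:R != 0 :> rat by rewrite pnatr_eq0.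
set E := \sum_(1 <= j < m.+1) (b.+1%:R ^+ j)^-1 * mhs2 b (m - j).
have tail_succ : \sum_(1 <= j < m.+2) (b.+1%:R ^+ j)^-1 * mhs2 b (m.+1 - j) =
                 b.+1%:R^-1 * (mhs2 b m + E).
  rewrite big_ltn // big_add1 /= expr1 subn1 /= mulrDr /E mulr_sumr; congr (_ + _).
  by apply: eq_bigr => j _; rewrite subSS exprS invfM mulrA.
rewrite /= tail_succ -/E mulrDr (mulrCA _ 2) (mulrA b.+1%:R) divff // mul1r; ring.
Qed.

Lemma apery_sumE n m : (0 < m)%N -> apery_sum n m = - mhs2 n m.
Proof.
elim: n m => [|n IHn] m m_gt0.
  by rewrite /apery_sum big_geq //=; case: m m_gt0 => // m _; rewrite oppr0.
have n_neq0 : n.+1%:R != 0 :> rat by rewrite pnatr_eq0.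
elim: m m_gt0 => [//|m IHm] _; apply: (mulfI n_neq0).
have := apery_sum_rec n m; have := mhs2_rec n m.
case: m IHm => [|m] IHm.
  have := apery_sum0_rec n.
  rewrite (IHn 1%N) // !mhs2_weight0 !mulrN; lra.
rewrite IHm // (IHn m.+2) // (IHn m.+1) // !mulrN; lra.
Qed.

Section TupleRcons.
Variables (T : Type) (d : nat).

Lemma tnth_rcons_widen (t : d.-tuple T) x (i : 'I_d) :
  tnth [tuple of rcons t x] (widen_ord (leqnSn d) i) = tnth t i.
Proof. by rewrite !(tnth_nth x) /= nth_rcons size_tuple ltn_ord. Qed.

Lemma tnth_rcons_max (t : d.-tuple T) x : tnth [tuple of rcons t x] ord_max = x.
Proof. by rewrite (tnth_nth x) /= nth_rcons size_tuple ltnn eqxx. Qed.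

End TupleRcons.

Lemma big_tuple_rcons (R : Type) (idx : R) (op : Monoid.com_law idx)
    (T : finType) d (F : d.+1.-tuple T -> R) :
  \big[op/idx]_(k : d.+1.-tuple T) F k =
  \big[op/idx]_(t : d.-tuple T) \big[op/idx]_(x : T) F [tuple of rcons t x].
Proof.
rewrite pair_big /= (reindex (fun p : d.-tuple T * T => [tuple of rcons p.1 p.2])) //=.
exists (fun k => ([tuple of belast (thead k) (behead_tuple k)], last (thead k) (behead k))).
  move=> [[[|y s] size_s] x] _ /=; first by congr pair; apply: val_inj.
  by congr pair; [apply: val_inj; rewrite /= belast_rcons | rewrite last_rcons].
by move=> k _; apply: val_inj; case: k / tupleP => x k /=; rewrite -lastI.
Qed.

Lemma big_ord_nat_range (V : nmodType) N a b (F : nat -> V) : (b <= N.+1)%N ->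
  \sum_(k : 'I_N.+1 | (a <= k < b)%N) F k = \sum_(a <= k < b) F k.
Proof.
move=> b_le; rewrite big_geq_mkord (big_ord_widen_cond _ _ _ b_le).
by apply: eq_bigl => k; rewrite andbC.
Qed.

Section BoundedMhs.
Variable N : nat.

Definition mhs_lt (b d : nat) (t : seq nat) : rat :=
  \sum_(k : d.-tuple 'I_N.+1 | path ltn 0%N (map val k) && (last 0%N (map val k) < b)%N)
     \prod_(i < d) (((tnth k i : nat)%:R) ^+ (nth 0%N t i))^-1.

Lemma mhs_lt_depth0 b t : mhs_lt b 0 t = (0 < b)%N%:R.
Proof.
rewrite /mhs_lt; case: b => [|b]; first by rewrite big_pred0 // => k; rewrite [k]tuple0.
by rewrite (big_pred1 [tuple]) ?big_ord0 // => k; rewrite [k]tuple0 /=; apply/esym/eqP.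
Qed.

Lemma mhs_lt_rcons b d t x : size t = d ->
  mhs_lt b d.+1 (rcons t x) =
  \sum_(k : 'I_N.+1 | (0 < k < b)%N) (k%:R ^+ x)^-1 * mhs_lt k d t.
Proof.
move=> size_t; rewrite /mhs_lt big_mkcond big_tuple_rcons exchange_big [RHS]big_mkcond /=.
apply: eq_bigr => k _.
under eq_bigr => s _.
  rewrite map_rcons rcons_path last_rcons big_ord_recr /= tnth_rcons_max.
  rewrite nth_rcons size_t ltnn eqxx.
  under eq_bigr => i _ do rewrite tnth_rcons_widen nth_rcons size_t ltn_ord.
  over.
have [k_range|k_out] := boolP (0 < k < b)%N; last first.
  apply: big1 => s _; case: ifP => // /andP[/andP[_ last_lt] lt_kb].
  by move: k_out; rewrite lt_kb (leq_ltn_trans (leq0n _) last_lt).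
rewrite mulr_sumr [RHS]big_mkcond; apply: eq_bigr => s _.
case/andP: k_range => _ ->; rewrite andbT.
by case: ifP; rewrite ?mulr0 // mulrC.
Qed.

End BoundedMhs.

Section Compositions.
Variables N R : nat.

Definition is_comp_of (m d : nat) (s : d.-tuple 'I_R.+1) : bool :=
  all (fun x : 'I_R.+1 => (0 < x)%N) s && (\sum_(i < d) (tnth s i : nat) == m)%N.

Lemma comp_depth_le m d (s : d.-tuple 'I_R.+1) : is_comp_of m s -> (d <= m)%N.
Proof.
move=> /andP[/all_tnthP s_pos /eqP <-].
rewrite -[X in (X <= _)%N]card_ord -sum1_card; exact: leq_sum.
Qed.

Lemma is_comp_of_rcons m d (s : d.-tuple 'I_R.+1) j :
  is_comp_of m [tuple of rcons s j] = [&& is_comp_of (m - j) s, (0 < j)%N & (j <= m)%N].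
Proof.
rewrite /is_comp_of /= all_rcons big_ord_recr /= tnth_rcons_max.
under eq_bigr => i _ do rewrite tnth_rcons_widen.
case: (0 < j)%N; rewrite /= ?andbF //; case: (all _ _); rewrite /= ?andbF //.
by apply/eqP/andP => [<- | [/eqP -> j_le]]; [rewrite addnK leq_addl | rewrite subnK].
Qed.

Lemma is_comp_of_depth0 m (s : 0.-tuple 'I_R.+1) : is_comp_of m s = (m == 0)%N.
Proof. by rewrite [s]tuple0 /is_comp_of big_ord0 /=; exact: eq_sym. Qed.

Lemma sum_comp_depth_gt m d (F : d.-tuple 'I_R.+1 -> rat) : (m < d)%N ->
  \sum_(s | is_comp_of m s) F s = 0.
Proof.
move=> lt_md; rewrite big_pred0 // => s.
by apply/negbTE/negP => /comp_depth_le; rewrite leqNgt lt_md.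
Qed.

Definition comp_mhs2 (b m : nat) : rat :=
  \sum_(0 <= d < R.+1)
     2 ^+ d * \sum_(s : d.-tuple 'I_R.+1 | is_comp_of m s) mhs_lt N b d (map val s).

Lemma comp_mhs2_weight0 b : comp_mhs2 b 0 = (0 < b)%N%:R.
Proof.
rewrite /comp_mhs2 big_ltn // expr0 mul1r (big_pred1 [tuple]); last first.
  by move=> s; rewrite is_comp_of_depth0 [s]tuple0; apply/esym/eqP.
rewrite mhs_lt_depth0 big_nat big1 ?addr0 // => d /andP[d_gt0 _].
by rewrite sum_comp_depth_gt ?mulr0.
Qed.

Lemma comp_mhs2_weight_gt0 b m : (0 < m)%N ->
  comp_mhs2 b m =
  \sum_(1 <= d < R.+1)
     2 ^+ d * \sum_(s : d.-tuple 'I_R.+1 | is_comp_of m s) mhs_lt N b d (map val s).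
Proof.
move=> m_gt0; rewrite /comp_mhs2 big_ltn // [X in 2 ^+ 0 * X]big_pred0 ?mulr0 ?add0r //.
by move=> s; rewrite is_comp_of_depth0 gtn_eqF.
Qed.

Lemma comp_mhs_rcons b m d :
  \sum_(s : d.+1.-tuple 'I_R.+1 | is_comp_of m s) mhs_lt N b d.+1 (map val s) =
  \sum_(k : 'I_N.+1 | (0 < k < b)%N) \sum_(j : 'I_R.+1 | (0 < j < m.+1)%N)
     (k%:R ^+ j)^-1 * \sum_(s : d.-tuple 'I_R.+1 | is_comp_of (m - j) s) mhs_lt N k d (map val s).
Proof.
rewrite big_mkcond big_tuple_rcons /=.
under eq_bigr => t _ do under eq_bigr => j _ do
  rewrite is_comp_of_rcons map_rcons (mhs_lt_rcons _ _ _ (size_tuple (map_tuple val t))).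
transitivity (\sum_(t : d.-tuple 'I_R.+1) \sum_(j : 'I_R.+1 | (0 < j < m.+1)%N) \sum_(k : 'I_N.+1 | (0 < k < b)%N)
   (if is_comp_of (m - j) t then (k%:R ^+ j)^-1 * mhs_lt N k d (map val t) else 0)).
  apply: eq_bigr => t _; rewrite [RHS]big_mkcond; apply: eq_bigr => j _.
  rewrite ltnS; case: is_comp_of => /=; last by rewrite big1 ?if_same.
  by case: (_ && _).
rewrite exchange_big; under eq_bigr => j _ do rewrite exchange_big.
rewrite exchange_big /=; apply: eq_big => // k _; apply: eq_big => // j _.
by rewrite mulr_sumr [RHS]big_mkcond; apply: eq_big => // t _; case: is_comp_of.
Qed.

Lemma comp_mhs2_rec b m : (0 < m <= R)%N -> (b <= N.+1)%N ->
  comp_mhs2 b m =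
  \sum_(1 <= k < b) \sum_(1 <= j < m.+1) 2 * (k%:R ^+ j)^-1 * comp_mhs2 k (m - j).
Proof.
move=> /andP[m_gt0 m_le] b_le.
rewrite comp_mhs2_weight_gt0 // big_add1 /=.
under eq_bigr => d _ do rewrite comp_mhs_rcons.
rewrite -(big_ord_nat_range _ _ b_le).
under [RHS]eq_bigr => k _.
  rewrite -(big_ord_nat_range _ _ (m_le : m.+1 <= R.+1)%N).
  under eq_bigr => j /andP[j_gt0 _].
    rewrite /comp_mhs2 big_nat_recr //= (sum_comp_depth_gt _ (_ : m - j < R)%N); last first.
      by rewrite (leq_trans _ m_le) // ltn_subrL j_gt0 m_gt0.
    rewrite mulr0 addr0 mulr_sumr.
    over.
  over.
rewrite /=; under eq_bigr => d _ do rewrite mulr_sumr; rewrite exchange_big /=.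
apply: eq_big => // k _; under eq_bigr => d _ do rewrite mulr_sumr; rewrite exchange_big /=.
apply: eq_big => // j _; apply: eq_bigr => d _; rewrite exprS; ring.
Qed.

Lemma comp_mhs2E b m : (b <= N)%N -> (m <= R)%N -> comp_mhs2 b.+1 m = mhs2 b m.
Proof.
elim: b m => [|b IHb] m b_le m_le.
  case: m m_le => [|m] m_le; first by rewrite comp_mhs2_weight0.
  by rewrite comp_mhs2_rec ?big_geq.
have b_leN : (b <= N)%N := ltnW b_le.
case: m m_le => [|m] m_le; first by rewrite comp_mhs2_weight0 mhs2_weight0.
rewrite comp_mhs2_rec // big_nat_recr //= -comp_mhs2_rec ?(leqW b_le) // IHb //.
congr (_ + _); rewrite mulr_sumr; apply: eq_big_nat => j _.
by rewrite IHb ?mulrA // (leq_trans (leq_subr _ _) m_le).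
Qed.

End Compositions.

Lemma mhsE n d (t : d.-tuple nat) : (0 < d)%N -> mhs n t = mhs_lt n n.+1 d t.
Proof.
move=> d_gt0; rewrite /mhs /mhs_lt; apply: eq_big => [k | k _].
  case: d k t d_gt0 => // d k t _; case: k / tupleP => x k.
  by rewrite /incr_pos /= last_map ltn_ord andbT.
by apply: eq_bigr => i _; rewrite (tnth_nth 0%N).
Qed.

Theorem theorem4p1 (n r : nat) (hn : (1 <= n)%N) (hr : (1 <= r)%N) :
  \sum_(1 <= k < n.+1) ((-1) ^+ k / (k%:R ^+ r) * ('C(n, k))%:R * ('C(n + k, k))%:R : rat)
  = - \sum_(1 <= d < r.+1)
        (2 ^+ d * \sum_(s : d.-tuple 'I_r.+1 | is_comp s)
                      mhs n [tuple of map (fun x : 'I_r.+1 => (x : nat)) s]).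
Proof.
rewrite -/(apery_sum n r) apery_sumE // -(@comp_mhs2E n r n r) //.
rewrite comp_mhs2_weight_gt0 //; congr (- _); apply: eq_big_nat => d /andP[d_gt0 _]; congr (_ * _).
by apply: eq_bigr => s _; rewrite mhsE.
Qed.
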